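(* Let $\mathcal E$ be a nest on a complex Banach space $X$ and let $\Phi,\Theta$ be admissible support functions on $\mathcal E$ such that $\mathcal M(\Phi)=\mathcal M(\Theta)$. Then $\Phi(E)=\Theta(E)$ for every $E\in\mathcal E\setminus\{\{0\}\}$.
   Context: A nest $\mathcal E$ on $X$ is a family of closed linear subspaces of $X$, totally ordered by inclusion, containing $\{0\}$ and $X$, closed under arbitrary meets $\wedge$ (intersections) and joins $\vee$ (norm-closed linear spans of unions). For $E\in\mathcal E$, $E_-=\vee\{F\in\mathcal E: F\subsetneq E\}$. A support function on $\mathcal E$ is an inclusion-preserving map $\Phi:\mathcal E\to\mathcal E$; it is admissible if for every $N\in\mathcal E\setminus\{\{0\}\}$, $\vee_{E\in\mathcal E,E\subsetneq N}\Phi(E)=\Phi(N_-)$. For a support function $\Phi$, $\mathcal M(\Phi)=\{T\in\mathcal B(X): TE\subseteq\Phi(E)\ \forall E\in\mathcal E\}$. *)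

From HB Require Import structures.
From mathcomp Require Import all_boot all_order all_algebra.
From mathcomp Require Import all_classical all_reals all_analysis.
From mathcomp Require Import complex.
Set Implicit Arguments. Unset Strict Implicit. Unset Printing Implicit Defensive.
Import Order.TTheory GRing.Theory Num.Theory.
Import numFieldNormedType.Exports.
Local Open Scope classical_set_scope.
Local Open Scope ring_scope.

Section Nests.
Variables (K : numFieldType) (X : normedModType K).

Definition closed_subspace (E : set X) : Prop :=
  closed E /\ E 0 /\ (forall (a : K) (x y : X), E x -> E y -> E (a *: x + y)).

Definition cspan (A : set X) : set X :=
  \bigcap_(F in [set F | closed_subspace F /\ A `<=` F]) F.

Definition proper_sub (F E : set X) : Prop := F `<=` E /\ F <> E.

Definition is_nest (N : set (set X)) : Prop :=
  (forall E, N E -> closed_subspace E) /\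
  (forall E F, N E -> N F -> E `<=` F \/ F `<=` E) /\
  N [set 0] /\ N setT /\
  (forall S, S `<=` N -> N (\bigcap_(E in S) E)) /\
  (forall S, S `<=` N -> N (cspan (\bigcup_(E in S) E))).

Definition nest_minus (N : set (set X)) (E : set X) : set X :=
  cspan (\bigcup_(F in [set F | N F /\ proper_sub F E]) F).

Definition support_function (N : set (set X)) (Phi : set X -> set X) : Prop :=
  (forall E, N E -> N (Phi E)) /\
  (forall E F, N E -> N F -> E `<=` F -> Phi E `<=` Phi F).

Definition admissible (N : set (set X)) (Phi : set X -> set X) : Prop :=
  support_function N Phi /\
  forall N0, N N0 -> N0 <> [set 0] ->
    cspan (\bigcup_(E in [set E | N E /\ proper_sub E N0]) Phi E) = Phi (nest_minus N N0).

(* bounded (= continuous) linear operators on X *)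
Definition bounded_op (T : X -> X) : Prop :=
  (forall (a : K) (x y : X), T (a *: x + y) = a *: T x + T y) /\ continuous T.

Definition in_M (N : set (set X)) (Phi : set X -> set X) (T : X -> X) : Prop :=
  bounded_op T /\ forall E, N E -> T @` E `<=` Phi E.

End Nests.

From Pilot Require Import Defs.

(* We show that Phi(E) is contained in Theta(E) for every E <> {0} when
   Phi is admissible (then symmetry gives equality).  The tool is rank-one
   operators z |-> f(z) x: if f is a continuous functional vanishing on a closed
   subspace A with f(y) <> 0 for some y in B, and every member of the nest not
   inside A contains C, then z |-> f(z) x lies in M(Phi) for each x in Phi(C),
   hence in M(Theta), and applying it to y gives x in Theta(B).
   - If E_- <> E, take A = E_-, B = C = E and y in E \ E_-.
   - If E_- = E, admissibility writes Phi(E) as the closed span of the Phi(F),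
     F a proper predecessor of E; take A = C = F, B = E, y in E \ F.
   The separating functional f comes from the Hahn-Banach theorem, which is not
   in the library: we prove the real version (Zorn's lemma applied to graphs of
   dominated partial functionals, extended one dimension at a time) for an
   abstract real vector space, then complexify it in the complex normed space X. *)

From HB Require Import structures.
From mathcomp Require Import all_boot all_order all_algebra.
From mathcomp Require Import all_classical all_reals all_analysis.
From mathcomp Require Import complex ring lra.
Set Implicit Arguments. Unset Strict Implicit. Unset Printing Implicit Defensive.
Import Order.TTheory GRing.Theory Num.Theory.
Import numFieldNormedType.Exports.
Local Open Scope classical_set_scope.
Local Open Scope ring_scope.

Section ClosedSubspaces.
Variables (K : numFieldType) (X : normedModType K).

Lemma closed_subspace0 (A : set X) : closed_subspace A -> A 0.
Proof. by case=> _ []. Qed.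

Lemma closed_subspaceZ (A : set X) a x : closed_subspace A -> A x -> A (a *: x).
Proof. by case=> _ [A0 Al] Ax; rewrite -[_ *: _]addr0; apply: Al. Qed.

Lemma closed_subspaceD (A : set X) x y : closed_subspace A -> A x -> A y -> A (x + y).
Proof. by case=> _ [_ Al] Ax Ay; rewrite -[x]scale1r; apply: Al. Qed.

Lemma cspan_min (A F : set X) : closed_subspace F -> A `<=` F -> cspan A `<=` F.
Proof. by move=> cF AF x; apply; split. Qed.

Lemma cspan_sup (A : set X) : A `<=` cspan A.
Proof. by move=> x Ax F [_ AF]; apply: AF. Qed.

End ClosedSubspaces.

Section RealHahnBanach.
Variables (R : realType) (V : zmodType) (s : R -> V -> V) (p : V -> R).
Hypothesis sD : forall r x y, s r (x + y) = s r x + s r y.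
Hypothesis sDl : forall r q x, s (r + q) x = s r x + s q x.
Hypothesis sA : forall r q x, s r (s q x) = s (r * q) x.
Hypothesis s1 : forall x, s 1 x = x.
Hypothesis pD : forall x y, p (x + y) <= p x + p y.
Hypothesis pZ : forall r x, 0 < r -> p (s r x) = r * p x.

Lemma s0 x : s 0 x = 0.
Proof. by have := sDl 0 0 x; rewrite addr0 => h; apply: (addrI (s 0 x)); rewrite addr0 -h. Qed.

Lemma sNr r x : s (- r) x = - s r x.
Proof. by apply/eqP; rewrite -addr_eq0 -sDl addNr s0. Qed.

Lemma sBl r q x : s (r - q) x = s r x - s q x.
Proof. by rewrite sDl sNr. Qed.

(* Partial functionals on V are handled through their graphs G : set (V * R). *)
Definition graph_functional (G : set (V * R)) : Prop :=
  forall x a b, G (x, a) -> G (x, b) -> a = b.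

Definition graph_linear (G : set (V * R)) : Prop :=
  forall r x y a b, G (x, a) -> G (y, b) -> G (s r x + y, r * a + b).

Definition graph_dominated (G : set (V * R)) : Prop :=
  forall x a, G (x, a) -> a <= p x.

Definition dominated_graph (G : set (V * R)) : Prop :=
  [/\ graph_functional G, graph_linear G & graph_dominated G].

Lemma graph_zero (G : set (V * R)) q : graph_linear G -> G q -> G (0, 0).
Proof.
by case: q => d g lG Gdg; have := lG (-1) _ _ _ _ Gdg Gdg; rewrite sNr s1 addNr mulN1r addNr.
Qed.

Lemma graph_scale (G : set (V * R)) d g t :
  graph_linear G -> G (d, g) -> G (s t d, t * g).
Proof. by move=> lG Gdg; have := lG t _ _ _ _ Gdg (graph_zero lG Gdg); rewrite !addr0. Qed.

Lemma graph_sub (G : set (V * R)) d1 g1 d2 g2 :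
  graph_linear G -> G (d1, g1) -> G (d2, g2) -> G (d2 - d1, g2 - g1).
Proof.
by move=> lG G1 G2; have := lG (-1) _ _ _ _ G1 G2; rewrite sNr s1 mulN1r !(addrC (- _)).
Qed.

Lemma extension_constant (A : set (V * R)) z d0 g0 :
  dominated_graph A -> A (d0, g0) ->
  exists c, (forall d g, A (d, g) -> g - p (d - z) <= c) /\
            (forall d g, A (d, g) -> c <= p (d + z) - g).
Proof.
move=> [_ lA dA] A0.
have cross d1 g1 d2 g2 : A (d1, g1) -> A (d2, g2) ->
    g1 - p (d1 - z) <= p (d2 + z) - g2.
  move=> A1 A2; have := dA _ _ (lA 1 _ _ _ _ A1 A2); rewrite s1 mul1r => h.
  have := pD (d1 - z) (d2 + z); rewrite addrCA subrK addrC => h2; lra.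
pose S := [set t | exists d g, A (d, g) /\ t = g - p (d - z)].
have hS : has_sup S.
  split; first by exists (g0 - p (d0 - z)), d0, g0.
  by exists (p (d0 + z) - g0) => t [d [g [Adg ->]]]; exact: cross.
exists (sup S); split=> [d g Adg|d g Adg].
  by apply: sup_upper_bound => //; exists d, g.
apply: ge_sup; first by case: hS.
by move=> t [d' [g' [A' ->]]]; exact: cross.
Qed.

Definition extend_graph (A : set (V * R)) (z : V) (c : R) : set (V * R) :=
  [set q | exists d g r, A (d, g) /\ q = (d + s r z, g + r * c)].

Lemma extend_graph_sub A z c : A `<=` extend_graph A z c.
Proof. by move=> [d g] Adg; exists d, g, 0; rewrite s0 mul0r !addr0. Qed.

Lemma extend_graph_linear A z c : graph_linear A -> graph_linear (extend_graph A z c).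
Proof.
move=> lA t x y a b [d1 [g1 [r1 [A1 [-> ->]]]]] [d2 [g2 [r2 [A2 [-> ->]]]]].
exists (s t d1 + d2), (t * g1 + g2), (t * r1 + r2); split; first exact: lA.
congr (_, _); last by rewrite mulrDr mulrDl mulrA; lra.
by rewrite sD sA sDl -!addrA; congr (_ + _); rewrite addrCA.
Qed.

Lemma extend_graph_functional A z c :
  graph_functional A -> graph_linear A -> (forall a, ~ A (z, a)) ->
  graph_functional (extend_graph A z c).
Proof.
move=> fA lA nz x a b [d1 [g1 [r1 [A1 [-> ->]]]]] [d2 [g2 [r2 [A2 []]]]].
have [<-|rne] := eqVneq r1 r2.
  by move=> /addIr e1 ->; rewrite -e1 in A2; rewrite (fA _ _ _ A1 A2).
move=> e _; exfalso.
have ez : s (r1 - r2) z = d2 - d1.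
  by rewrite sBl; apply/eqP; rewrite subr_eq addrAC -e [d1 + _]addrC addrK.
have := graph_scale ((r1 - r2)^-1) lA (graph_sub lA A1 A2).
by rewrite -ez sA mulVf ?subr_eq0 // s1; apply: nz.
Qed.

Lemma extend_graph_dominated A z c : graph_linear A -> graph_dominated A ->
  (forall d g, A (d, g) -> g - p (d - z) <= c) ->
  (forall d g, A (d, g) -> c <= p (d + z) - g) ->
  graph_dominated (extend_graph A z c).
Proof.
move=> lA dA lo hi x a [d [g [r [Adg [-> ->]]]]].
have [r0|r0|->] := ltgtP r 0; last by rewrite s0 mul0r !addr0; apply: dA.
  have t0 : 0 < - r by rewrite oppr_gt0.
  have := lo _ _ (graph_scale (- r)^-1 lA Adg).
  have -> : s (- r)^-1 d - z = s (- r)^-1 (d + s r z).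
    by rewrite sD sA invrN mulNr mulVf ?lt_eqF // (sNr 1) s1.
  rewrite pZ ?invr_gt0 // => h; have := ler_wpM2l (ltW t0) h.
  rewrite mulrBr !mulrA mulfV ?gt_eqF // !mul1r; lra.
have := hi _ _ (graph_scale r^-1 lA Adg).
have -> : s r^-1 d + z = s r^-1 (d + s r z) by rewrite sD sA mulVf ?gt_eqF // s1.
rewrite pZ ?invr_gt0 // => h; have := ler_wpM2l (ltW r0) h.
rewrite mulrBr !mulrA mulfV ?gt_eqF // !mul1r; lra.
Qed.

Lemma one_step_extension (A : set (V * R)) z d0 g0 :
  dominated_graph A -> A (d0, g0) -> (forall a, ~ A (z, a)) ->
  exists2 B, dominated_graph B & A `<` B.
Proof.
move=> dgA A0 nz; have [c [lo hi]] := extension_constant z dgA A0.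
case: dgA => fA lA dA.
exists (extend_graph A z c); first split.
- exact: extend_graph_functional.
- exact: extend_graph_linear.
- exact: extend_graph_dominated.
- split=> [|]; first exact: extend_graph_sub.
  move=> BA; apply: (nz c); apply: BA.
  by exists 0, 0, 1; rewrite s1 mul1r !add0r; split => //; apply: graph_zero lA A0.
Qed.

(* By Zorn's lemma, every nonempty dominated graph extends to a total one.
   The extension condition is imposed only on nonempty graphs, so that the
   empty union of a chain is admissible. *)
Lemma total_dominated_extension (G0 : set (V * R)) q0 :
  G0 q0 -> dominated_graph G0 ->
  exists A, [/\ dominated_graph A, G0 `<=` A & forall z, exists a, A (z, a)].
Proof.
move=> G0q dG0.
pose P G := dominated_graph G /\ (G !=set0 -> G0 `<=` G).
have [|A [[dA G0A] Amax]] := @Zorn_bigcup _ P.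
  move=> F FP Ftot; have domF G : F G -> dominated_graph G by move=> /FP[].
  have common G1 G2 q1 q2 : F G1 -> F G2 -> G1 q1 -> G2 q2 ->
      exists2 G, F G & G q1 /\ G q2.
    move=> F1 F2 G1q G2q; have [G12|G21] := Ftot _ _ F1 F2.
      by exists G2 => //; split => //; apply: G12.
    by exists G1 => //; split => //; apply: G21.
  split; first split.
  - move=> x a b [G1 F1 G1a] [G2 F2 G2b].
    have [G FG [Ga Gb]] := common _ _ _ _ F1 F2 G1a G2b.
    by have [f _ _] := domF _ FG; apply: f Ga Gb.
  - move=> r x y a b [G1 F1 G1a] [G2 F2 G2b].
    have [G FG [Ga Gb]] := common _ _ _ _ F1 F2 G1a G2b.
    by have [_ l _] := domF _ FG; exists G => //; apply: l Ga Gb.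
  - by move=> x a [G FG Ga]; have [_ _ d] := domF _ FG; apply: d.
  - move=> [q [G FG Gq]] z G0z; exists G => //.
    by have [_ h] := FP _ FG; apply: h => //; exists q.
have {G0A}G0A : G0 `<=` A.
  apply: G0A; apply: contrapT => nA; apply: (Amax G0); last by split=> // _.
  split=> [q Aq|/(_ q0 G0q) Aq]; exfalso; apply: nA; first by exists q.
  by exists q0.
exists A; split => // z; apply: contrapT => nz.
have [[d g] Aq] : A !=set0 by exists q0; apply: G0A.
have [B dB AB] := one_step_extension dA Aq (fun a Aza => nz (ex_intro _ a Aza)).
by apply: (Amax B AB); split => // _; apply: subset_trans G0A _; case: AB.
Qed.

Theorem real_hahn_banach (G0 : set (V * R)) q0 :
  G0 q0 -> dominated_graph G0 ->
  exists U : V -> R, [/\ forall r x y, U (s r x + y) = r * U x + U y,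
    forall x, U x <= p x & forall x a, G0 (x, a) -> U x = a].
Proof.
move=> G0q dG0; have [A [[fA lA dA] G0A total]] := total_dominated_extension G0q dG0.
pose U x := xget 0 [set a | A (x, a)].
have UA x : A (x, U x) by exact: (xgetPex 0 (total x)).
exists U; split.
- by move=> r x y; apply: fA (UA _) (lA _ _ _ _ _ (UA x) (UA y)).
- by move=> x; apply: dA (UA x).
- by move=> x a /G0A Axa; apply: fA (UA x) Axa.
Qed.
End RealHahnBanach.

Lemma normc_real (R : realType) (r : R) : `|(r%:C)%C| = (`|r|%:C)%C.
Proof. by rewrite normc_def /= expr0n addr0 sqrtr_sqr. Qed.

Lemma normc_i (R : realType) : `|'i%C| = 1 :> R[i].
Proof. by rewrite normc_def /= expr0n expr1n add0r sqrtr1. Qed.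

(* The algebraic identity behind the complex linearity of a complexification. *)
Lemma complexify_identity (R : realType) (c : R[i]) (u v u' v' : R) :
  ((complex.Re c * u + complex.Im c * v + u')%:C
     - 'i * (- complex.Im c * u + complex.Re c * v + v')%:C =
   c * (u%:C - 'i * v%:C) + (u'%:C - 'i * v'%:C))%C.
Proof.
case: c => a b /=; rewrite -!complexr0; simpc.
by apply/eqP; rewrite eq_complex /=; apply/andP; split; apply/eqP; ring.
Qed.

Section ComplexNormedSpace.
Variables (R : realType) (X : normedModType R[i]).
Local Open Scope complex_scope.

Definition rscale (r : R) (x : X) : X := r%:C *: x.
Definition rnorm (x : X) : R := complex.Re `|x|.

Lemma normE x : `|x| = (rnorm x)%:C.
Proof. by rewrite /rnorm RRe_real // normr_real. Qed.

Lemma rnorm_ge0 x : 0 <= rnorm x.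
Proof. by rewrite -ler0c -normE. Qed.

Lemma rnormD x y : rnorm (x + y) <= rnorm x + rnorm y.
Proof. by have := ler_normD x y; rewrite !normE -raddfD lecR. Qed.

Lemma rnormZ r x : rnorm (rscale r x) = `|r| * rnorm x.
Proof. by have := normrZ (r%:C) x; rewrite !normE normc_real -rmorphM => /complexI. Qed.

Lemma rnormN x : rnorm (- x) = rnorm x.
Proof. by rewrite /rnorm normrN. Qed.

Lemma rnorm_i x : rnorm ('i *: x) = rnorm x.
Proof. by rewrite /rnorm normrZ normc_i mul1r. Qed.

Lemma rscaleD r x y : rscale r (x + y) = rscale r x + rscale r y.
Proof. by rewrite /rscale scalerDr. Qed.

Lemma rscaleDl r q x : rscale (r + q) x = rscale r x + rscale q x.
Proof. by rewrite /rscale raddfD scalerDl. Qed.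

Lemma rscaleA r q x : rscale r (rscale q x) = rscale (r * q) x.
Proof. by rewrite /rscale scalerA -rmorphM. Qed.

Lemma rscale1 x : rscale 1 x = x.
Proof. by rewrite /rscale rmorph1 scale1r. Qed.

Definition real_linear (U : X -> R) : Prop :=
  forall r x y, U (rscale r x + y) = r * U x + U y.

Section RealLinear.
Variables (U : X -> R) (Ulin : real_linear U).

Lemma rlin0 : U 0 = 0.
Proof.
have := Ulin 1 0 0; rewrite /rscale scaler0 addr0 mul1r => h.
by apply: (addIr (U 0)); rewrite add0r -h.
Qed.

Lemma rlinD x y : U (x + y) = U x + U y.
Proof. by have := Ulin 1 x y; rewrite /rscale rmorph1 scale1r mul1r. Qed.

Lemma rlinZ r x : U (rscale r x) = r * U x.
Proof. by rewrite -[rscale r x]addr0 Ulin rlin0 addr0. Qed.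

Lemma rlinN x : U (- x) = - U x.
Proof. by have := rlinZ (-1) x; rewrite /rscale rmorphN1 scaleN1r mulN1r. Qed.

Lemma rlinZc b x : U (b *: x) = complex.Re b * U x + complex.Im b * U ('i *: x).
Proof. by rewrite {1}(complexE b) scalerDl [_ * _]mulrC -scalerA rlinD !rlinZ. Qed.

End RealLinear.

Definition complexify (U : X -> R) (x : X) : (R[i] : numFieldType) := (U x)%:C - 'i * (U ('i *: x))%:C.

Lemma complexify_linear (U : X -> R) : real_linear U ->
  forall a x y, complexify U (a *: x + y) = a * complexify U x + complexify U y.
Proof.
move=> Ulin a x y.
rewrite /complexify scalerDr scalerA !(rlinD Ulin) (rlinZc Ulin a) (rlinZc Ulin ('i * a)) (mulrC 'i a) ReiNIm ImiRe.
exact: complexify_identity.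
Qed.

Lemma complexify_bound (U : X -> R) (k : R) : real_linear U ->
  (forall x, U x <= k * rnorm x) -> forall x, `|complexify U x| <= (2 * k)%:C * `|x|.
Proof.
move=> Ulin Ub x.
have Ubd u : `|U u| <= k * rnorm u.
  by rewrite ler_norml Ub andbT lerNl -(rlinN Ulin) -(rnormN u) Ub.
apply: le_trans (ler_normB _ _) _.
rewrite normrM normc_i mul1r !normc_real -raddfD normE -rmorphM lecR.
apply: le_trans (lerD (Ubd _) (Ubd _)) _; rewrite rnorm_i.
by rewrite (_ : _ + _ = 2 * k * rnorm x) //; ring.
Qed.

Lemma complexify_continuous (U : X -> R) (k : R) : 0 < k -> real_linear U ->
  (forall x, U x <= k * rnorm x) -> continuous (complexify U).
Proof.
move=> k0 Ulin Ub x.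
have Fsub u v : complexify U u - complexify U v = complexify U (u - v).
  have := complexify_linear Ulin (-1) v u.
  by rewrite mulN1r scaleN1r addrC => ->; rewrite addrC.
have k20 : 0 < (2 * k)%:C :> R[i] by rewrite ltcR mulr_gt0.
apply/(@cvgrPdist_lt _ _ _ (nbhs x)) => eps eps0; near=> z.
rewrite Fsub (le_lt_trans (complexify_bound Ulin Ub _)) // -ltr_pdivlMl //.
near: z; apply: cvgr_dist_lt => //.
by rewrite mulr_gt0 // invr_gt0.
Unshelve. all: by end_near.
Qed.

Lemma closed_subspace_gap (A : set X) (y : X) : closed_subspace A -> ~ A y ->
  exists2 e : R, 0 < e & forall a r, A a -> `|r| * e <= rnorm (a + rscale r y).
Proof.
move=> cA nAy.
have [eps eps0 hb] : exists2 eps : R[i], 0 < eps & forall w, `|y - w| < eps -> ~ A w.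
  have := closed_openC cA.1; rewrite openE => /(_ y nAy).
  by move=> /nbhs_normP [eps eps0 h]; exists eps => // w hw; apply: h.
pose e := complex.Re eps.
have epsE : eps = e%:C by rewrite /e RRe_real // gtr0_real.
exists e => [|a r Aa]; first by rewrite -ltcR -epsE.
have [->|r0] := eqVneq r 0; first by rewrite normr0 mul0r rnorm_ge0.
have Aw : A (- rscale r^-1 a) by rewrite /rscale -scaleNr; apply: closed_subspaceZ.
have := contra_not (hb _) (fun h : ~ A (- rscale r^-1 a) => h Aw).
have -> : y - - rscale r^-1 a = rscale r^-1 (a + rscale r y).
  by rewrite opprK rscaleD rscaleA mulVf // rscale1 addrC.
rewrite normE rnormZ epsE ltcR => /negP; rewrite -leNgt => h.
have := ler_wpM2l (normr_ge0 r) h.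
by rewrite mulrA -normrM mulfV // normr1 mul1r.
Qed.

Lemma separating_functional (A : set X) (y : X) : closed_subspace A -> ~ A y ->
  exists F : X -> (R[i] : numFieldType),
    [/\ forall a x z, F (a *: x + z) = a * F x + F z, continuous F,
        forall a, A a -> F a = 0 & F y != 0].
Proof.
move=> cA nAy; have [e e0 gap] := closed_subspace_gap cA nAy.
(* the functional a + r y |-> r on the span of A and y, dominated by |.|/e *)
pose G0 := [set q | exists a r, A a /\ q = (a + rscale r y, r)].
pose p x := rnorm x / e.
have pD x z : p (x + z) <= p x + p z.
  by rewrite /p -mulrDl ler_wpM2r ?invr_ge0 ?(ltW e0) // rnormD.
have pZ r x : 0 < r -> p (rscale r x) = r * p x.
  by move=> r0; rewrite /p rnormZ gtr0_norm // mulrA.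
have G0q : G0 (0 + rscale 0 y, 0) by exists 0, 0; split => //; apply: closed_subspace0.
have dG0 : dominated_graph rscale p G0.
  split.
  - move=> x a b [a1 [r1 [A1 [-> ->]]]] [a2 [r2 [A2 []]]] e12 ->.
    apply: contrapT => /eqP rne; apply: nAy.
    have ey : rscale (r1 - r2) y = a2 - a1.
      rewrite /rscale raddfB scalerBl; apply/eqP; rewrite subr_eq addrAC -[a2 + _]e12.
      by rewrite [a1 + _]addrC addrK.
    have Ad : A (a2 - a1) by rewrite addrC -scaleN1r; apply: cA.2.2.
    have := closed_subspaceZ ((r1 - r2)^-1)%:C cA Ad.
    by rewrite -ey -/(rscale _ _) rscaleA mulVf ?subr_eq0 // rscale1.
  - move=> r x z a b [a1 [r1 [A1 [-> ->]]]] [a2 [r2 [A2 [-> ->]]]].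
    exists (rscale r a1 + a2), (r * r1 + r2); split.
      by apply: closed_subspaceD => //; apply: closed_subspaceZ.
    by congr (_, _); rewrite rscaleD rscaleA rscaleDl; exact: addrACA.
  - move=> x a [a1 [r1 [A1 [-> ->]]]]; rewrite /p ler_pdivlMr //.
    by apply: le_trans (gap _ _ A1); rewrite ler_wpM2r ?(ltW e0) // ler_norm.
have [U [Ulin Ub UG0]] := real_hahn_banach rscaleD rscaleDl rscaleA rscale1 pD pZ G0q dG0.
have UA a : A a -> U a = 0.
  by move=> Aa; apply: UG0; exists a, 0; rewrite /rscale rmorph0 scale0r addr0.
have Uy : U y = 1 by apply: UG0; exists 0, 1; rewrite add0r rscale1; split => //; apply: closed_subspace0.
have Ub' x : U x <= e^-1 * rnorm x by rewrite mulrC; apply: Ub.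
exists (complexify U); split.
- exact: complexify_linear.
- by apply: (complexify_continuous _ Ulin Ub'); rewrite invr_gt0.
- by move=> a Aa; rewrite /complexify UA // UA; [rewrite mulr0 subr0 | apply: closed_subspaceZ].
- rewrite /complexify Uy -!complexr0; simpc.
  by apply/eqP => /(congr1 (@complex.Re R)) /= /eqP; rewrite oner_eq0.
Qed.

End ComplexNormedSpace.

Section NestFacts.
Variables (K : numFieldType) (X : normedModType K) (N : set (set X)).
Hypothesis nestN : is_nest N.

Lemma nest_closed E : N E -> closed_subspace E.
Proof. by case: nestN => h _; apply: h. Qed.

Lemma nest_total E F : N E -> N F -> E `<=` F \/ F `<=` E.
Proof. by case: nestN => _ [h _]; apply: h. Qed.

Lemma nest_minus_in E : N (nest_minus N E).
Proof. by case: nestN => _ [_ [_ [_ [_ h]]]]; apply: h => F []. Qed.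

Lemma nest_minus_sub E : N E -> nest_minus N E `<=` E.
Proof. by move=> NE; apply: cspan_min (nest_closed NE) _ => z [F [_ [FE _]]]; apply: FE. Qed.

Lemma nest_minus_sup (E F : set X) : N F -> Defs.proper_sub F E -> F `<=` nest_minus N E.
Proof. by move=> NF FE z Fz; apply: cspan_sup; exists F. Qed.

Lemma nest_not_sub F G : N F -> N G -> ~ G `<=` F -> F `<=` G.
Proof. by move=> NF NG nGF; case: (nest_total NG NF). Qed.

End NestFacts.

Lemma proper_sub_point (T : Type) (F E : set T) : F `<=` E -> F <> E ->
  exists y, E y /\ ~ F y.
Proof.
move=> FE FnE; apply: contrapT => h; apply: FnE; apply/seteqP; split => // z Ez.
by apply: contrapT => nz; apply: h; exists z.
Qed.

Section RankOne.
Variables (K : numFieldType) (X : normedModType K).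

Definition rank_one (F : X -> K) (x : X) : X -> X := fun z => F z *: x.

Lemma rank_one_bounded (F : X -> K) x :
  (forall a u v, F (a *: u + v) = a * F u + F v) -> continuous F ->
  bounded_op (rank_one F x).
Proof.
move=> Flin Fc; split; first by move=> a u v; rewrite /rank_one Flin scalerDl scalerA.
by move=> z; apply: continuousZr_tmp; apply: Fc.
Qed.

Lemma rank_one_in_M (N : set (set X)) Phi (A C : set X) (F : X -> K) x :
  is_nest N -> support_function N Phi ->
  (forall a u v, F (a *: u + v) = a * F u + F v) -> continuous F ->
  (forall a, A a -> F a = 0) -> (forall G, N G -> ~ G `<=` A -> C `<=` G) ->
  N C -> Phi C x -> in_M N Phi (rank_one F x).
Proof.
move=> nestN [NPhi monoPhi] Flin Fc FA hC NC Px.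
split; first exact: rank_one_bounded.
move=> G NG _ [z Gz <-]; have cPG := nest_closed nestN (NPhi _ NG).
have [GA|nGA] := pselect (G `<=` A).
  by rewrite /rank_one FA ?scale0r; [apply: closed_subspace0 | apply: GA].
by apply: closed_subspaceZ => //; apply: (monoPhi C G) => //; exact: hC.
Qed.

End RankOne.

Section SupportComparison.
Variables (R : realType) (X : normedModType R[i]) (N : set (set X)).
Variables (Phi Theta : set X -> set X).
Hypothesis nestN : is_nest N.
Hypothesis supPhi : support_function N Phi.
Hypothesis supTheta : support_function N Theta.
Hypothesis M_sub : forall T : X -> X, in_M N Phi T -> in_M N Theta T.

(* Testing M(Phi) against rank-one operators: if y in B lies outside the
   closed subspace A, and every member of N not inside A contains C, then
   Phi(C) is contained in Theta(B). *)
Lemma support_transfer (A B C : set X) (y : X) :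
  closed_subspace A -> N B -> B y -> ~ A y ->
  (forall G, N G -> ~ G `<=` A -> C `<=` G) -> N C -> Phi C `<=` Theta B.
Proof.
move=> cA NB By nAy hC NC x Px.
have [F [Flin Fc FA Fy]] := separating_functional cA nAy.
have [_ /(_ B NB (rank_one F x y))] := M_sub (rank_one_in_M nestN supPhi Flin Fc FA hC NC Px).
move=> /(_ (ex_intro2 _ _ y By erefl)) ThB.
have cTB := nest_closed nestN (supTheta.1 _ NB).
by have := closed_subspaceZ (F y)^-1 cTB ThB; rewrite scalerA mulVf // scale1r.
Qed.

Lemma support_le (E : set X) : admissible N Phi -> N E -> E <> [set 0] ->
  Phi E `<=` Theta E.
Proof.
move=> [_ admPhi] NE E0; have NEm := nest_minus_in nestN E.
have [EmE|EmnE] := pselect (nest_minus N E = E).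
  (* E = E_-: Phi(E) is spanned by the Phi(F), F a proper predecessor of E *)
  rewrite -{1}EmE -(admPhi _ NE E0).
  apply: cspan_min (nest_closed nestN (supTheta.1 _ NE)) _ => z [F [NF [FE FnE]] Pz].
  have [y [Ey nFy]] := proper_sub_point FE FnE.
  exact: (support_transfer (nest_closed nestN NF) NE Ey nFy
    (fun G => nest_not_sub nestN NF) NF Pz).
(* E_- is a proper subspace of E: separate a point of E from E_- *)
have [y [Ey nEmy]] := proper_sub_point (nest_minus_sub nestN NE) EmnE.
apply: (support_transfer (nest_closed nestN NEm) NE Ey nEmy _ NE) => G NG nGEm. have [//|GE] := nest_total nestN NE NG.
have [->//|GnE] := pselect (G = E).
by exfalso; apply: nGEm; apply: nest_minus_sup.
Qed.

End SupportComparison.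

Theorem mainTheorem4 (R : realType) (X : completeNormedModType R[i])
    (N : set (set X)) (Phi Theta : set X -> set X) :
  is_nest N -> admissible N Phi -> admissible N Theta ->
  (forall T : X -> X, in_M N Phi T <-> in_M N Theta T) ->
  forall E, N E -> E <> [set 0] -> Phi E = Theta E.
Proof.
move=> nestN admPhi admTheta sameM E NE E0; apply/seteqP; split.
- by apply: (support_le nestN admPhi.1 admTheta.1) => // T /sameM.
- by apply: (support_le nestN admTheta.1 admPhi.1) => // T /sameM.
Qed.
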